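(* Let $\mathbf K$ be an M$\Delta$C generated as a thick subcategory by a single object $G$. Then the quasicompact open subsets of $\operatorname{Spc}\mathbf K$ are exactly the sets $\operatorname{Spc}\mathbf K\setminus V(A)$ for objects $A\in\mathbf K$.
   Context: M$\Delta$C: triangulated category with monoidal structure $(\otimes,\mathbf 1)$, $\otimes$ exact in each variable. ''Generated by $G$ as a thick subcategory'': the smallest full triangulated subcategory closed under direct summands containing $G$ is $\mathbf K$. Prime ideal: proper thick two-sided ideal $\mathbf P$ with $\mathbf I\otimes\mathbf J\subseteq\mathbf P\Rightarrow\mathbf I\subseteq\mathbf P$ or $\mathbf J\subseteq\mathbf P$. $\operatorname{Spc}\mathbf K$: set of primes with closed sets the intersections $V(\mathcal S)=\bigcap_{A\in\mathcal S}V(A)$ of $V(A)=\{\mathbf P:A\notin\mathbf P\}$. *)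

From mathcomp Require Import all_boot all_algebra.
From Stdlib Require List.
Import GRing.Theory.
Set Implicit Arguments. Unset Strict Implicit. Unset Printing Implicit Defensive.
Local Open Scope ring_scope.

Record PreAddCat := {
  Ob :> Type;
  Hom : Ob -> Ob -> zmodType;
  comp : forall A B C : Ob, Hom B C -> Hom A B -> Hom A C;
  idm : forall A : Ob, Hom A A;
  compA : forall A B C D (h : Hom C D) (g : Hom B C) (f : Hom A B),
      comp h (comp g f) = comp (comp h g) f;
  comp1m : forall A B (f : Hom A B), comp (idm B) f = f;
  compm1 : forall A B (f : Hom A B), comp f (idm A) = f;
  compDl : forall A B C (g g' : Hom B C) (f : Hom A B),
      comp (g + g') f = comp g f + comp g' f;
  compDr : forall A B C (g : Hom B C) (f f' : Hom A B),
      comp g (f + f') = comp g f + comp g f'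
}.
Arguments Hom {p}.
Arguments comp {p A B C}.
Arguments idm {p}.
Notation "g \oc f" := (comp g f) (at level 40, left associativity).

Definition is_iso (C : PreAddCat) (A B : C) (f : Hom A B) :=
  exists g : Hom B A, g \oc f = idm A /\ f \oc g = idm B.
Definition isomorphic (C : PreAddCat) (A B : C) := exists f : Hom A B, is_iso f.

Definition is_zero_obj (C : PreAddCat) (Z : C) :=
  forall A : C, (forall f g : Hom Z A, f = g) /\ (forall f g : Hom A Z, f = g).

Definition is_biproduct (C : PreAddCat) (A B X : C)
    (i1 : Hom A X) (i2 : Hom B X) (p1 : Hom X A) (p2 : Hom X B) :=
  [/\ p1 \oc i1 = idm A, p2 \oc i2 = idm B, p1 \oc i2 = 0, p2 \oc i1 = 0
    & i1 \oc p1 + i2 \oc p2 = idm X].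

Definition direct_summand (C : PreAddCat) (A X : C) :=
  exists (B : C) (i1 : Hom A X) (i2 : Hom B X) (p1 : Hom X A) (p2 : Hom X B),
    is_biproduct i1 i2 p1 p2.

Record AddCat := {
  AC_base :> PreAddCat;
  zero_obj : AC_base;
  zero_objP : is_zero_obj zero_obj;
  biprod_ex : forall A B : AC_base, exists (X : AC_base) (i1 : Hom A X) (i2 : Hom B X)
      (p1 : Hom X A) (p2 : Hom X B), is_biproduct i1 i2 p1 p2
}.
Arguments zero_obj {a}.

Record PreTri := {
  PT_base :> AddCat;
  Sh : PT_base -> PT_base;
  shm : forall A B : PT_base, Hom A B -> Hom (Sh A) (Sh B);
  dist : forall X Y Z : PT_base, Hom X Y -> Hom Y Z -> Hom Z (Sh X) -> Prop
}.
Arguments Sh {p}.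
Arguments shm {p A B}.
Arguments dist {p X Y Z}.

Section TriAxioms.
Variable T : PreTri.

Definition shift_ax :=
  ((forall (A B C : T) (g : Hom B C) (f : Hom A B), shm (g \oc f) = shm g \oc shm f) /\
     (forall A : T, shm (idm A) = idm (Sh A)) /\
     (forall (A B : T) (f g : Hom A B), shm (f + g) = shm f + shm g) /\
     (forall (A B : T) (f g : Hom A B), shm f = shm g -> f = g) /\
     (forall (A B : T) (g : Hom (Sh A) (Sh B)), exists f, shm f = g) /\
     (forall Y : T, exists X : T, isomorphic (Sh X) Y)).

Definition TR1 :=
  [/\ (forall X : T, dist (idm X) (0 : Hom X zero_obj) (0 : Hom zero_obj (Sh X))),
      (forall (X Y Z X' Y' Z' : T) (f : Hom X Y) (g : Hom Y Z) (h : Hom Z (Sh X))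
         (f' : Hom X' Y') (g' : Hom Y' Z') (h' : Hom Z' (Sh X'))
         (a : Hom X X') (b : Hom Y Y') (c : Hom Z Z'),
         dist f g h -> is_iso a -> is_iso b -> is_iso c ->
         b \oc f = f' \oc a -> c \oc g = g' \oc b -> shm a \oc h = h' \oc c ->
         dist f' g' h')
    & (forall (X Y : T) (f : Hom X Y), exists (Z : T) (g : Hom Y Z) (h : Hom Z (Sh X)),
         dist f g h)].

Definition TR2 :=
  forall (X Y Z : T) (f : Hom X Y) (g : Hom Y Z) (h : Hom Z (Sh X)),
    dist f g h -> dist g h (- shm f).

Definition TR3 :=
  forall (X Y Z X' Y' Z' : T) (f : Hom X Y) (g : Hom Y Z) (h : Hom Z (Sh X))
    (f' : Hom X' Y') (g' : Hom Y' Z') (h' : Hom Z' (Sh X'))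
    (a : Hom X X') (b : Hom Y Y'),
    dist f g h -> dist f' g' h' -> b \oc f = f' \oc a ->
    exists c : Hom Z Z', c \oc g = g' \oc b /\ shm a \oc h = h' \oc c.

Definition TR4 :=
  forall (X Y Z Z' X' Y' : T) (f : Hom X Y) (g : Hom Y Z)
    (u : Hom Y Z') (u' : Hom Z' (Sh X))
    (v : Hom Z X') (v' : Hom X' (Sh Y))
    (w : Hom Z Y') (w' : Hom Y' (Sh X)),
    dist f u u' -> dist g v v' -> dist (g \oc f) w w' ->
    exists (a : Hom Z' Y') (b : Hom Y' X'),
      [/\ dist a b (shm u \oc v'), a \oc u = w \oc g, w' \oc a = u',
          b \oc w = v & v' \oc b = shm f \oc w'].
End TriAxioms.

Record TriCat := {
  TC_base :> PreTri;
  TC_shift : shift_ax TC_base;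
  TC_TR1 : TR1 TC_base;
  TC_TR2 : TR2 TC_base;
  TC_TR3 : TR3 TC_base;
  TC_TR4 : TR4 TC_base
}.

Record PreMDC := {
  PM_base :> TriCat;
  tens : PM_base -> PM_base -> PM_base;
  tensm : forall A A' B B' : PM_base, Hom A A' -> Hom B B' -> Hom (tens A B) (tens A' B');
  unit_obj : PM_base;
  assoc : forall A B C : PM_base, Hom (tens (tens A B) C) (tens A (tens B C));
  lunit : forall A : PM_base, Hom (tens unit_obj A) A;
  runit : forall A : PM_base, Hom (tens A unit_obj) A;
  (* structure isos making - (x) Y and Y (x) - exact (triangulated) functors *)
  phiL : forall X Y : PM_base, Hom (tens (Sh X) Y) (Sh (tens X Y));
  phiR : forall X Y : PM_base, Hom (tens X (Sh Y)) (Sh (tens X Y))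
}.
Arguments tens {p}.
Arguments tensm {p A A' B B'}.
Arguments unit_obj {p}.
Arguments assoc {p}.
Arguments lunit {p}.
Arguments runit {p}.
Arguments phiL {p}.
Arguments phiR {p}.
Notation "A \ot B" := (tens A B) (at level 45, left associativity).

Section MonAxioms.
Variable K : PreMDC.

Definition bifunctor_ax :=
  [/\ (forall (A A' A'' B B' B'' : K) (f : Hom A A') (f' : Hom A' A'')
          (g : Hom B B') (g' : Hom B' B''),
         tensm (f' \oc f) (g' \oc g) = tensm f' g' \oc tensm f g),
      (forall A B : K, tensm (idm A) (idm B) = idm (A \ot B)),
      (forall (A A' B B' : K) (f f' : Hom A A') (g : Hom B B'),
         tensm (f + f') g = tensm f g + tensm f' g)
    & (forall (A A' B B' : K) (f : Hom A A') (g g' : Hom B B'),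
         tensm f (g + g') = tensm f g + tensm f g')].

Definition monoidal_ax :=
  ((forall A B C : K, is_iso (assoc A B C)) /\
     (forall A : K, is_iso (lunit A)) /\
     (forall A : K, is_iso (runit A)) /\
     (forall (A A' B B' C C' : K) (f : Hom A A') (g : Hom B B') (h : Hom C C'),
         assoc A' B' C' \oc tensm (tensm f g) h = tensm f (tensm g h) \oc assoc A B C) /\
     (forall (A A' : K) (f : Hom A A'), lunit A' \oc tensm (idm unit_obj) f = f \oc lunit A) /\
     (forall (A A' : K) (f : Hom A A'), runit A' \oc tensm f (idm unit_obj) = f \oc runit A) /\
     (forall A B C D : K,
         assoc A B (C \ot D) \oc assoc (A \ot B) C D =
         tensm (idm A) (assoc B C D) \oc assoc A (B \ot C) D \oc tensm (assoc A B C) (idm D)) /\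
     (forall A B : K,
         tensm (idm A) (lunit B) \oc assoc A unit_obj B = tensm (runit A) (idm B))).

Definition exact_ax :=
  ((forall X Y : K, is_iso (phiL X Y)) /\
     (forall X Y : K, is_iso (phiR X Y)) /\
     (forall (X X' Y Y' : K) (f : Hom X X') (g : Hom Y Y'),
         phiL X' Y' \oc tensm (shm f) g = shm (tensm f g) \oc phiL X Y) /\
     (forall (X X' Y Y' : K) (f : Hom X X') (g : Hom Y Y'),
         phiR X' Y' \oc tensm f (shm g) = shm (tensm f g) \oc phiR X Y) /\
     (forall (Y X1 X2 X3 : K) (f : Hom X1 X2) (g : Hom X2 X3) (h : Hom X3 (Sh X1)),
         dist f g h ->
         dist (tensm f (idm Y)) (tensm g (idm Y)) (phiL X1 Y \oc tensm h (idm Y))) /\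
     (forall (Y X1 X2 X3 : K) (f : Hom X1 X2) (g : Hom X2 X3) (h : Hom X3 (Sh X1)),
         dist f g h ->
         dist (tensm (idm Y) f) (tensm (idm Y) g) (phiR Y X1 \oc tensm (idm Y) h))).
End MonAxioms.

Record MDC := {
  MDC_base :> PreMDC;
  MDC_bifunctor : bifunctor_ax MDC_base;
  MDC_monoidal : monoidal_ax MDC_base;
  MDC_exact : exact_ax MDC_base
}.

Section Spectrum.
Variable K : MDC.

Definition thick (S : K -> Prop) :=
  [/\ S zero_obj,
      (forall A B : K, S A -> isomorphic A B -> S B),
      (forall A : K, S A <-> S (Sh A)),
      (forall (X Y Z : K) (f : Hom X Y) (g : Hom Y Z) (h : Hom Z (Sh X)),
         dist f g h ->
         [/\ (S X -> S Y -> S Z), (S Y -> S Z -> S X) & (S Z -> S X -> S Y)])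
    & (forall A X : K, S X -> direct_summand A X -> S A)].

Definition thick_ideal (S : K -> Prop) :=
  thick S /\ (forall A B : K, S A -> S (A \ot B) /\ S (B \ot A)).

Definition prime_ideal (P : K -> Prop) :=
  [/\ thick_ideal P, (exists A : K, ~ P A)
    & (forall I J : K -> Prop, thick_ideal I -> thick_ideal J ->
         (forall A B : K, I A -> J B -> P (A \ot B)) ->
         (forall A, I A -> P A) \/ (forall B, J B -> P B))].

Definition thick_generated_by (G : K) :=
  forall S : K -> Prop, thick S -> S G -> forall A : K, S A.

Definition Spc := {P : K -> Prop | prime_ideal P}.

Definition Vsupp (A : K) : Spc -> Prop := fun P => ~ proj1_sig P A.

Definition Spc_closed (Z : Spc -> Prop) :=
  exists S : K -> Prop, forall P, Z P <-> (forall A, S A -> Vsupp A P).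

Definition Spc_open (U : Spc -> Prop) := Spc_closed (fun P => ~ U P).

Definition Spc_quasicompact (U : Spc -> Prop) :=
  forall (I : Type) (W : I -> Spc -> Prop),
    (forall i, Spc_open (W i)) -> (forall P, U P -> exists i, W i P) ->
    exists s : list I, forall P, U P -> exists i, List.In i s /\ W i P.
End Spectrum.

(* A thick generator turns primality into a statement about single objects:
   since the thick subcategory generated by G is everything, a prime P contains
   x (x) G (x) y only if it contains x or y.  Hence the objects
   B1 (x) G (x) B2 (x) G (x) ... (x) 1 realise finite unions of basic opens
   U(B) = {P | B in P} as single basic opens, so a quasicompact open set is some
   U(A).  Conversely U(A) is quasicompact: if a cover of U(A) had no finite
   subcover, Zorn's lemma would produce an ideal containing A maximal among
   those missing every object whose U(-) is finitely covered; the same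
   G-twisted product closure makes it prime, and it lies in U(A) but in no
   member of the cover. *)
From Pilot Require Import Defs.
From mathcomp Require Import all_boot all_algebra.
From mathcomp Require classical_sets.
From Stdlib Require Import Classical.
Import GRing.Theory.
Set Implicit Arguments. Unset Strict Implicit.
Local Open Scope ring_scope.

Lemma additive_map0 (U V : zmodType) (f : U -> V) :
  {morph f : x y / x + y} -> f 0 = 0.
Proof. by move=> fD; apply: (addrI (f 0)); rewrite -fD !addr0. Qed.

Section Monoidal.
Variable K : MDC.

Lemma comp0l (A B C : K) (f : Defs.Hom A B) : (0 : Defs.Hom B C) \oc f = 0.
Proof.
by apply: (additive_map0 (f := fun g : Defs.Hom B C => g \oc f)) => g g'; apply: compDl.
Qed.

Lemma tensm_comp (A A' A'' B B' B'' : K) (f : Defs.Hom A A') (f' : Defs.Hom A' A'')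
    (g : Defs.Hom B B') (g' : Defs.Hom B' B'') :
  tensm (f' \oc f) (g' \oc g) = tensm f' g' \oc tensm f g.
Proof. by case: (MDC_bifunctor K). Qed.

Lemma tensm_id (A B : K) : tensm (idm A) (idm B) = idm (A \ot B).
Proof. by case: (MDC_bifunctor K). Qed.

Lemma tensmDl (A A' B B' : K) (f f' : Defs.Hom A A') (g : Defs.Hom B B') :
  tensm (f + f') g = tensm f g + tensm f' g.
Proof. by case: (MDC_bifunctor K). Qed.

Lemma tensmDr (A A' B B' : K) (f : Defs.Hom A A') (g g' : Defs.Hom B B') :
  tensm f (g + g') = tensm f g + tensm f g'.
Proof. by case: (MDC_bifunctor K). Qed.

Lemma tensm0l (A A' B B' : K) (g : Defs.Hom B B') : tensm (0 : Defs.Hom A A') g = 0.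
Proof.
by apply: (additive_map0 (f := fun f : Defs.Hom A A' => tensm f g)) => f f'; apply: tensmDl.
Qed.

Lemma tensm0r (A A' B B' : K) (f : Defs.Hom A A') : tensm f (0 : Defs.Hom B B') = 0.
Proof.
by apply: (additive_map0 (f := fun g : Defs.Hom B B' => tensm f g)) => g g'; apply: tensmDr.
Qed.

Lemma isomorphic_sym (A B : K) : isomorphic A B -> isomorphic B A.
Proof. by case=> f [g [h1 h2]]; exists g, f. Qed.

Lemma isomorphic_trans (A B C : K) :
  isomorphic A B -> isomorphic B C -> isomorphic A C.
Proof.
case=> f [f' [h1 h2]] [g [g' [h3 h4]]]; exists (g \oc f), (f' \oc g'); split.
  by rewrite Defs.compA -(Defs.compA f') h3 compm1.
by rewrite Defs.compA -(Defs.compA g) h2 compm1.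
Qed.

Lemma is_iso_idm (A : K) : is_iso (idm A).
Proof. by exists (idm A); rewrite comp1m. Qed.

Lemma is_iso_tensm (A A' B B' : K) (f : Defs.Hom A A') (g : Defs.Hom B B') :
  is_iso f -> is_iso g -> is_iso (tensm f g).
Proof.
case=> f' [h1 h2] [g' [h3 h4]]; exists (tensm f' g').
by rewrite -!tensm_comp h1 h2 h3 h4 !tensm_id.
Qed.

Lemma isomorphic_tensr (A B Y : K) : isomorphic A B -> isomorphic (A \ot Y) (B \ot Y).
Proof. by case=> f hf; exists (tensm f (idm Y)); apply: is_iso_tensm (is_iso_idm Y). Qed.

Lemma isomorphic_tensl (A B Y : K) : isomorphic A B -> isomorphic (Y \ot A) (Y \ot B).
Proof. by case=> f hf; exists (tensm (idm Y) f); apply: is_iso_tensm (is_iso_idm Y) _. Qed.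

Lemma zero_obj_idm (Z : K) : is_zero_obj Z -> idm Z = 0.
Proof. by move=> hZ; case: (hZ Z) => h _; apply: h. Qed.

Lemma isomorphic_zero_obj (Z : K) : idm Z = 0 -> isomorphic zero_obj Z.
Proof.
move=> hZ; exists 0, 0; split; rewrite comp0l //.
exact/esym/zero_obj_idm/zero_objP.
Qed.

Lemma zero_tensl (Y : K) : isomorphic zero_obj (zero_obj \ot Y).
Proof.
by apply: isomorphic_zero_obj; rewrite -tensm_id (zero_obj_idm (@zero_objP K)) tensm0l.
Qed.

Lemma zero_tensr (Y : K) : isomorphic zero_obj (Y \ot zero_obj).
Proof.
by apply: isomorphic_zero_obj; rewrite -tensm_id (zero_obj_idm (@zero_objP K)) tensm0r.
Qed.

Lemma assoc_isomorphic (A B C : K) : isomorphic ((A \ot B) \ot C) (A \ot (B \ot C)).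
Proof. by case: (MDC_monoidal K) => h _; exists (assoc A B C). Qed.

Lemma lunit_isomorphic (A : K) : isomorphic (unit_obj \ot A) A.
Proof. by case: (MDC_monoidal K) => _ [h _]; exists (lunit A). Qed.

Lemma runit_isomorphic (A : K) : isomorphic (A \ot unit_obj) A.
Proof. by case: (MDC_monoidal K) => _ [_ [h _]]; exists (runit A). Qed.

Lemma phiL_isomorphic (X Y : K) : isomorphic (Sh X \ot Y) (Sh (X \ot Y)).
Proof. by case: (MDC_exact K) => h _; exists (phiL X Y). Qed.

Lemma phiR_isomorphic (X Y : K) : isomorphic (X \ot Sh Y) (Sh (X \ot Y)).
Proof. by case: (MDC_exact K) => _ [h _]; exists (phiR X Y). Qed.

Lemma direct_summand_tensr (A X Y : K) :
  direct_summand A X -> direct_summand (A \ot Y) (X \ot Y).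
Proof.
case=> B [i1 [i2 [p1 [p2 [h1 h2 h3 h4 h5]]]]].
exists (B \ot Y), (tensm i1 (idm Y)), (tensm i2 (idm Y)), (tensm p1 (idm Y)),
  (tensm p2 (idm Y)).
split; rewrite -?tensm_comp ?comp1m ?h1 ?h2 ?h3 ?h4 ?tensm_id ?tensm0l //.
by rewrite -tensmDl h5 tensm_id.
Qed.

Lemma direct_summand_tensl (A X Y : K) :
  direct_summand A X -> direct_summand (Y \ot A) (Y \ot X).
Proof.
case=> B [i1 [i2 [p1 [p2 [h1 h2 h3 h4 h5]]]]].
exists (Y \ot B), (tensm (idm Y) i1), (tensm (idm Y) i2), (tensm (idm Y) p1),
  (tensm (idm Y) p2).
split; rewrite -?tensm_comp ?comp1m ?h1 ?h2 ?h3 ?h4 ?tensm_id ?tensm0r //.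
by rewrite -tensmDr h5 tensm_id.
Qed.

End Monoidal.

Section ThickSubcategories.
Variable K : MDC.

Lemma thick_isomorphic (S : K -> Prop) A B : thick S -> S A -> isomorphic A B -> S B.
Proof. by case=> _ h _ _ _; apply: h. Qed.

Lemma thick_ext (S T : K -> Prop) : (forall x, S x <-> T x) -> thick S -> thick T.
Proof.
move=> e [S0 Siso Ssh Sd Ssum]; split.
- exact/e.
- by move=> A B /e hA hAB; apply/e; apply: Siso hA hAB.
- by move=> A; rewrite -!e.
- move=> X Y Z f g h hd; case: (Sd _ _ _ _ _ _ hd) => a b c.
  by split; rewrite -!e.
- by move=> A X /e hX hs; apply/e; apply: Ssum hX hs.
Qed.

Lemma thick_bigcap (I : Type) (F : I -> K -> Prop) :
  (forall i, thick (F i)) -> thick (fun x => forall i, F i x).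
Proof.
move=> hF; split.
- by move=> i; case: (hF i).
- by move=> A B hA hAB i; apply: thick_isomorphic (hA i) hAB.
- by move=> A; split=> hA i; case: (hF i) => _ _ h _ _; apply/(h A).
- move=> X Y Z f g h hd.
  by split=> h1 h2 i; case: (hF i) => _ _ _ hD _; case: (hD _ _ _ _ _ _ hd) => a b c;
    [apply: a | apply: b | apply: c].
- by move=> A X hX hs i; case: (hF i) => _ _ _ _ h; apply: h (hX i) hs.
Qed.

Lemma thick_bigcap_in (I : Type) (R : I -> Prop) (F : I -> K -> Prop) :
  (forall i, R i -> thick (F i)) -> thick (fun x => forall i, R i -> F i x).
Proof.
move=> hF; apply: thick_ext (thick_bigcap (F := fun i : {i | R i} => F (sval i)) _).
  by move=> x; split=> h => [i Ri | [i Ri]]; [apply: h (exist _ i Ri) | apply: h].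
by case=> i Ri; apply: hF.
Qed.

Lemma thick_preim_tensr (S : K -> Prop) (Y : K) :
  thick S -> thick (fun x => S (x \ot Y)).
Proof.
case=> S0 Siso Ssh Sd Ssum; split.
- exact: Siso S0 (zero_tensl Y).
- by move=> A B hA hAB; apply: Siso hA (isomorphic_tensr Y hAB).
- move=> A; rewrite Ssh; split=> h; apply: Siso h _.
    exact/isomorphic_sym/phiL_isomorphic.
  exact/phiL_isomorphic.
- move=> X1 X2 X3 f g h hd; case: (MDC_exact K) => _ [_ [_ [_ [hE _]]]].
  exact: Sd _ _ _ _ _ _ (hE Y _ _ _ _ _ _ hd).
- by move=> A X hX hs; apply: Ssum hX (direct_summand_tensr Y hs).
Qed.

Lemma thick_preim_tensl (S : K -> Prop) (Y : K) :
  thick S -> thick (fun x => S (Y \ot x)).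
Proof.
case=> S0 Siso Ssh Sd Ssum; split.
- exact: Siso S0 (zero_tensr Y).
- by move=> A B hA hAB; apply: Siso hA (isomorphic_tensl Y hAB).
- move=> A; rewrite Ssh; split=> h; apply: Siso h _.
    exact/isomorphic_sym/phiR_isomorphic.
  exact/phiR_isomorphic.
- move=> X1 X2 X3 f g h hd; case: (MDC_exact K) => _ [_ [_ [_ [_ hE]]]].
  exact: Sd _ _ _ _ _ _ (hE Y _ _ _ _ _ _ hd).
- by move=> A X hX hs; apply: Ssum hX (direct_summand_tensl Y hs).
Qed.

Lemma thick_ideal_tensr (T : K -> Prop) x Z : thick_ideal T -> T x -> T (x \ot Z).
Proof. by case=> _ h hx; case: (h _ Z hx). Qed.

Lemma thick_ideal_tensl (T : K -> Prop) x Z : thick_ideal T -> T x -> T (Z \ot x).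
Proof. by case=> _ h hx; case: (h _ Z hx). Qed.

Definition thick_closure (S : K -> Prop) : K -> Prop :=
  fun x => forall T, thick T /\ (forall y, S y -> T y) -> T x.

Lemma thick_closure_thick S : thick (thick_closure S).
Proof. by apply: thick_bigcap_in => T []. Qed.

Lemma thick_closure_sub (S : K -> Prop) y : S y -> thick_closure S y.
Proof. by move=> hy T [_]; apply. Qed.

Lemma thick_closure_min (S T : K -> Prop) :
  thick T -> (forall y, S y -> T y) -> forall x, thick_closure S x -> T x.
Proof. by move=> tT h x; apply. Qed.

Lemma thick_closure_ideal (S : K -> Prop) :
  (forall x Z, S x -> S (x \ot Z) /\ S (Z \ot x)) -> thick_ideal (thick_closure S).
Proof.
move=> hS; split; first exact: thick_closure_thick.
move=> x Z hx; split.
- apply: (thick_closure_min (T := fun x => thick_closure S (x \ot Z))) hx.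
    exact: thick_preim_tensr (thick_closure_thick S).
  by move=> y /(hS y Z) [hyZ _]; apply: thick_closure_sub.
- apply: (thick_closure_min (T := fun x => thick_closure S (Z \ot x))) hx.
    exact: thick_preim_tensl (thick_closure_thick S).
  by move=> y /(hS y Z) [_ hZy]; apply: thick_closure_sub.
Qed.

Definition ideal_closure (A : K) : K -> Prop :=
  fun x => forall T, thick_ideal T /\ T A -> T x.

Lemma ideal_closure_ideal A : thick_ideal (ideal_closure A).
Proof.
split; first by apply: thick_bigcap_in => T [[]].
move=> x Z hx; split=> T [hT hA].
  exact: thick_ideal_tensr Z hT (hx T (conj hT hA)).
exact: thick_ideal_tensl Z hT (hx T (conj hT hA)).
Qed.

Lemma ideal_closure_self A : ideal_closure A A.
Proof. by move=> T []. Qed.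

End ThickSubcategories.

Section Primes.
Variables (K : MDC) (G : K).
Hypothesis hG : thick_generated_by G.

Lemma prime_not_unit (P : K -> Prop) : prime_ideal P -> ~ P unit_obj.
Proof.
move=> [[tP iP] [A hA] _] h1; apply: hA.
exact: thick_isomorphic tP ((iP _ A h1).1) (lunit_isomorphic A).
Qed.

(* The ideals I = {u | P (u (x) C (x) y) for all C} and J = {v | I (x) v in P}
   multiply into P; x lies in I because G generates K, and y lies in J. *)
Lemma prime_tensG (P : K -> Prop) x y :
  prime_ideal P -> P ((x \ot G) \ot y) -> P x \/ P y.
Proof.
move=> [[tP iP] _ pP] hxy.
pose I u := forall C, P ((u \ot C) \ot y).
have tI : thick_ideal I.
  split.
    apply: (thick_bigcap (F := fun C u => P ((u \ot C) \ot y))) => C.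
    exact: thick_preim_tensr (thick_preim_tensr y tP).
  move=> u Z hu; split=> C.
    exact: thick_isomorphic tP (hu _)
             (isomorphic_tensr y (isomorphic_sym (assoc_isomorphic u Z C))).
  apply: thick_isomorphic tP ((iP _ Z (hu C)).2) _.
  exact: isomorphic_trans (isomorphic_sym (assoc_isomorphic Z (u \ot C) y))
                          (isomorphic_tensr y (isomorphic_sym (assoc_isomorphic Z u C))).
pose J v := forall u, I u -> P (u \ot v).
have tJ : thick_ideal J.
  split.
    exact: (thick_bigcap_in (R := I) (F := fun u v => P (u \ot v)))
             (fun u _ => thick_preim_tensl u tP).
  move=> v Z hv; split=> u hu.
    exact: thick_isomorphic tP ((iP _ Z (hv u hu)).1) (assoc_isomorphic u v Z).
  exact: thick_isomorphic tP (hv _ (thick_ideal_tensr Z tI hu)) (assoc_isomorphic u Z v).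
have Ix : I x.
  exact: hG (fun C => P ((x \ot C) \ot y))
    (thick_preim_tensl x (thick_preim_tensr y tP)) hxy.
have Jy : J y.
  by move=> u hu; apply: thick_isomorphic tP (hu unit_obj)
                           (isomorphic_tensr y (runit_isomorphic u)).
by case: (pP I J tI tJ (fun a b ha hb => hb a ha)) => [/(_ x Ix) | /(_ y Jy)]; auto.
Qed.

Definition tensG_prod (s : seq K) : K :=
  foldr (fun B acc => (B \ot G) \ot acc) unit_obj s.

Lemma prime_tensG_prod (P : K -> Prop) (s : seq K) :
  prime_ideal P -> P (tensG_prod s) <-> exists2 B, List.In B s & P B.
Proof.
move=> pP; have [tP _ _] := pP; rewrite /tensG_prod.
elim: s => [|B s IH] /=.
  by split=> [/(prime_not_unit pP) | []].
split=> [/(prime_tensG pP) [PB | /IH [B' sB' PB']] | [B' [<- | sB'] PB']].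
- by exists B; first left.
- by exists B'; first right.
- exact: thick_ideal_tensr _ tP (thick_ideal_tensr _ tP PB').
- by apply: thick_ideal_tensl _ tP _; apply/IH; exists B'.
Qed.

End Primes.

Section PrimeAvoiding.
Variable K : MDC.

Lemma thick_ideal_ext (S T : K -> Prop) :
  (forall x, S x <-> T x) -> thick_ideal S -> thick_ideal T.
Proof.
move=> e [tS iS]; split; first exact: thick_ext e tS.
by move=> A B /e /(iS _ B) [hAB hBA]; split; apply/e.
Qed.

Lemma thick_ideal_chain_union (F : (K -> Prop) -> Prop) :
  (exists X, F X) -> (forall X, F X -> thick_ideal X) ->
  (forall X Y, F X -> F Y -> (forall x, X x -> Y x) \/ (forall x, Y x -> X x)) ->
  thick_ideal (fun x => exists2 X, F X & X x).
Proof.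
move=> [X0 FX0] hF chainF.
have common a b : (exists2 X, F X & X a) -> (exists2 X, F X & X b) ->
    exists X, [/\ F X, X a & X b].
  move=> [X FX Xa] [Y FY Yb].
  by case: (chainF X Y FX FY) => XY; [exists Y | exists X]; split => //; apply: XY.
split; first split.
- by exists X0; case: (hF X0 FX0) => -[].
- move=> A B [X FX XA] hAB; exists X => //.
  by case: (hF X FX) => tX _; apply: thick_isomorphic tX XA hAB.
- by move=> A; split=> -[X FX XA]; exists X => //; case: (hF X FX) => -[_ _ h _ _] _;
    apply/(h A).
- move=> X Y Z f g h hd; split=> ha hb; have [W [FW Wa Wb]] := common _ _ ha hb;
    case: (hF W FW) => -[_ _ _ hD _] _; case: (hD _ _ _ _ _ _ hd) => c1 c2 c3;
    exists W => //; first [exact: c1 Wa Wb | exact: c2 Wa Wb | exact: c3 Wa Wb].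
- move=> A X [W FW WX] hs; exists W => //.
  by case: (hF W FW) => -[_ _ _ _ h] _; apply: h WX hs.
- move=> A B [W FW WA]; split; exists W => //.
    exact: thick_ideal_tensr _ (hF W FW) WA.
  exact: thick_ideal_tensl _ (hF W FW) WA.
Qed.

Lemma tens_thick_closure_union (I J Q : K -> Prop) (C : K) :
  thick_ideal Q -> thick_ideal I -> (forall a b, I a -> J b -> Q (a \ot b)) ->
  forall x y, thick_closure (fun z => Q z \/ I z) x ->
              thick_closure (fun z => Q z \/ J z) y -> Q ((x \ot C) \ot y).
Proof.
move=> tQ tI IJQ x y hx; have [tQ' _] := tQ; move: y.
apply: (thick_closure_min (T := fun x => forall y,
  thick_closure (fun z => Q z \/ J z) y -> Q ((x \ot C) \ot y))) hx => [|{}x [Qx | Ix] y Qy].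
  exact: (thick_bigcap_in (F := fun y x => Q ((x \ot C) \ot y)))
           (fun y _ => thick_preim_tensr C (thick_preim_tensr y tQ')).
  exact: thick_ideal_tensr _ tQ (thick_ideal_tensr _ tQ Qx).
apply: (thick_closure_min (T := fun y => Q ((x \ot C) \ot y))) Qy.
  exact: thick_preim_tensl (x \ot C) tQ'.
move=> z [Qz | Jz]; first exact: thick_ideal_tensl _ tQ Qz.
exact: IJQ _ _ (thick_ideal_tensr C tI Ix) Jz.
Qed.

Variables (G : K) (M : K -> Prop).
Hypothesis M_tensG : forall m m', M m -> M m' -> M ((m \ot G) \ot m').

Definition avoiding_ideal (I X : K -> Prop) :=
  [/\ thick_ideal X, forall x, I x -> X x & forall m, M m -> ~ X m].

(* Zorn_bigcup needs the union of the empty chain, so empty sets are admitted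
   alongside the ideals. *)
Lemma maximal_avoiding_ideal (I : K -> Prop) :
  avoiding_ideal I I ->
  exists2 Q, avoiding_ideal I Q &
    forall X, avoiding_ideal I X -> (forall x, Q x -> X x) -> forall x, X x -> Q x.
Proof.
move=> aI.
have [|Q [PQ maxQ]] :=
  classical_sets.Zorn_bigcup (P := fun X => avoiding_ideal I X \/ forall x, ~ X x).
  move=> F FP Ftot.
  case: (classic (exists2 X, F X & avoiding_ideal I X)) => [[X0 FX0 aX0] | noF]; last first.
    right=> x [X FX Xx]; case: (FP X FX) => [aX | /(_ x)] //.
    by apply: noF; exists X.
  have unionE x : (exists2 X, F X & X x) <->
      exists2 X, (F X /\ avoiding_ideal I X) & X x.
    split=> [[X FX Xx] | [X [FX _] Xx]]; last by exists X.
    by case: (FP X FX) => [aX | /(_ x)] //; exists X.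
  left; split.
  - apply: thick_ideal_ext (fun x => iff_sym (unionE x)) _.
    apply: thick_ideal_chain_union; first by exists X0.
      by move=> X [_ []].
    by move=> X Y [FX _] [FY _]; apply: Ftot.
  - by move=> x Ix; exists X0 => //; case: aX0 => _ I_X0 _; apply: I_X0.
  - by move=> m Mm [X FX Xm]; case: (FP X FX) => [[_ _ /(_ m Mm)] | /(_ m)].
have aQ : avoiding_ideal I Q.
  case: PQ => // Q0; exfalso; apply: (maxQ I _ (or_introl aI)); split=> [x /Q0 //|].
  by case: aI => -[[I0 _ _ _ _] _] _ _ /(_ _ I0) /Q0.
exists Q => // X aX QX x Xx; apply: NNPP => nQx.
by apply: (maxQ X _ (or_introl aX)); split=> // /(_ x Xx).
Qed.

(* Enlarging Q by the ideals I or J forces it to meet M, at m resp. m'; the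
   object (m (x) G (x) m') then lies in both M and Q. *)
Lemma maximal_avoiding_prime (I Q : K -> Prop) :
  (exists m, M m) -> avoiding_ideal I Q ->
  (forall X, avoiding_ideal I X -> (forall x, Q x -> X x) -> forall x, X x -> Q x) ->
  prime_ideal Q.
Proof.
move=> [m0 Mm0] [tQ IQ QM] maxQ; split=> //; first by exists m0; apply: QM.
move=> I1 J1 tI1 tJ1 I1J1Q; apply: NNPP => /not_or_and [nI1 nJ1].
pose ext (S : K -> Prop) := thick_closure (fun z => Q z \/ S z).
have ext_meets S : thick_ideal S -> ~ (forall x, S x -> Q x) -> exists2 m, M m & ext S m.
  move=> tS nSQ; apply: NNPP => nmeet; apply: nSQ => x Sx.
  have tE : thick_ideal (ext S).
    apply: thick_closure_ideal => z Z [Qz | Sz].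
      by split; left; [apply: thick_ideal_tensr | apply: thick_ideal_tensl].
    by split; right; [apply: thick_ideal_tensr | apply: thick_ideal_tensl].
  apply: (maxQ (ext S)); last exact: thick_closure_sub (or_intror Sx).
    split=> // [y /IQ Qy | m Mm Em]; first exact: thick_closure_sub (or_introl Qy).
    by apply: nmeet; exists m.
  by move=> y Qy; apply: thick_closure_sub (or_introl Qy).
have [m Mm Em] := ext_meets I1 tI1 nI1.
have [m' Mm' Em'] := ext_meets J1 tJ1 nJ1.
exact: QM _ (M_tensG Mm Mm') (tens_thick_closure_union G tQ tI1 I1J1Q Em Em').
Qed.

Lemma exists_prime_avoiding (I : K -> Prop) :
  (exists m, M m) -> avoiding_ideal I I ->
  exists Q, [/\ prime_ideal Q, forall x, I x -> Q x & forall m, M m -> ~ Q m].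
Proof.
move=> M0 /maximal_avoiding_ideal [Q aQ maxQ].
have pQ := maximal_avoiding_prime M0 aQ maxQ.
by case: aQ => _ IQ QM; exists Q.
Qed.

End PrimeAvoiding.

Section Spectrum.
Variables (K : MDC) (G : K).
Hypothesis hG : thick_generated_by G.

Lemma not_Vsupp (A : K) (P : Spc K) : ~ Vsupp A P <-> proj1_sig P A.
Proof. by split=> [/NNPP | PA]. Qed.

Lemma Spc_openP (U : Spc K -> Prop) :
  Spc_open U <-> exists S : K -> Prop, forall P, U P <-> exists2 B, S B & proj1_sig P B.
Proof.
split=> -[S hS]; exists S => P; split.
- move=> u; apply: NNPP => nB; apply: (hS P).2 u => B SB PB.
  by apply: nB; exists B.
- by move=> [B SB PB]; apply: NNPP => nU; apply: (hS P).1 nU B SB PB.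
- by move=> nU B SB PB; apply: nU; apply/hS; exists B.
- by move=> hP /hS [B SB PB]; apply: hP B SB PB.
Qed.

Lemma Spc_open_basic (A : K) (U : Spc K -> Prop) :
  (forall P, U P <-> proj1_sig P A) -> Spc_open U.
Proof.
move=> hU; apply/Spc_openP; exists (fun B => B = A) => P.
by rewrite hU; split=> [PA | [B -> //]]; exists A.
Qed.

Lemma Spc_quasicompact_open_basic (U : Spc K -> Prop) :
  Spc_open U -> Spc_quasicompact U -> exists A, forall P, U P <-> proj1_sig P A.
Proof.
move=> /Spc_openP [S hS] qc.
pose W (i : {B | S B}) (P : Spc K) := proj1_sig P (sval i).
have [s hs] := qc _ W (fun i => Spc_open_basic (fun P => iff_refl (W i P)))
  (fun P u => let: ex_intro2 B SB PB := proj1 (hS P) u in ex_intro _ (exist _ B SB) PB).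
exists (tensG_prod G (List.map sval s)) => P.
rewrite (prime_tensG_prod hG _ (proj2_sig P)).
split=> [/hs [i [si Wi]] | [B /List.in_map_iff [i [<- _]] PB]].
  by exists (sval i) => //; apply: List.in_map.
by apply/hS; exists (sval i) => //; apply: svalP.
Qed.

(* A lies in the set of objects m whose basic open {P | m in P} is covered by
   finitely many W i; a prime avoiding that set would lie in U but in no W i. *)
Lemma Spc_quasicompact_basic (A : K) (U : Spc K -> Prop) :
  (forall P, U P <-> proj1_sig P A) -> Spc_quasicompact U.
Proof.
move=> hU I W hW cover.
pose fincov m :=
  exists s : list I, forall P : Spc K, proj1_sig P m -> exists i, List.In i s /\ W i P.
suff [s hs] : fincov A by exists s => P /hU; apply: hs.
have fincov_tensG m m' : fincov m -> fincov m' -> fincov ((m \ot G) \ot m').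
  move=> [s hs] [s' hs']; exists (s ++ s') => P.
  by case/(prime_tensG hG (proj2_sig P)) => [/hs | /hs'] [i [si Wi]];
    exists i; split=> //; apply: List.in_or_app; [left | right].
have cover_fincov P i : W i P -> exists2 B, fincov B & proj1_sig P B.
  case/Spc_openP: (hW i) => S hS /hS [B SB PB]; exists B => //.
  by exists [:: i] => Q QB; exists i; split; [left | apply/hS; exists B].
apply: NNPP => nA.
have [P PA] : exists P : Spc K, proj1_sig P A.
  apply: NNPP => nP; apply: nA; exists nil => P PA.
  by case: nP; exists P.
have [i Wi] := cover P (proj2 (hU P) PA).
have [B0 fB0 _] := cover_fincov P i Wi.
have [|Q [pQ AQ Qfin]] := exists_prime_avoiding fincov_tensG (ex_intro _ B0 fB0)
                           (I := ideal_closure A).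
  split=> [|//|m [s hs] Am]; first exact: ideal_closure_ideal.
  apply: nA; exists s => P' P'A; apply: hs; apply: Am; split=> //.
  by case: (proj2_sig P').
pose Q' : Spc K := exist _ Q pQ.
have [j Wj] := cover Q' (proj2 (hU Q') (AQ A (ideal_closure_self (A := A)))).
have [B fB QB] := cover_fincov Q' j Wj.
exact: Qfin B fB QB.
Qed.

End Spectrum.

Theorem mainTheorem15 (K : MDC) (G : K) (hG : thick_generated_by G)
    (U : Spc K -> Prop) :
  (Spc_open U /\ Spc_quasicompact U) <->
  exists A : K, forall P : Spc K, U P <-> ~ Vsupp A P.
Proof.
split=> [[oU qU] | [A hA]].
  have [A hA] := Spc_quasicompact_open_basic hG oU qU.
  by exists A => P; rewrite not_Vsupp.
have hU P : U P <-> proj1_sig P A by rewrite hA not_Vsupp.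
split; first exact: Spc_open_basic hU.
exact: (Spc_quasicompact_basic hG hU).
Qed.
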